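(* Let $\ell,r\in\mathcal{D}[0,\infty)$ with $\ell\le r$, let $c_0,c_0'\in\mathbb{R}$ and $\psi,\psi'\in\mathcal{D}[0,\infty)$, and suppose $(\phi,\eta)$ and $(\phi',\eta')$ solve the ESP on $[\ell(\cdot),r(\cdot)]$ for $c_0+\psi$ and $c_0'+\psi'$, respectively. If $\psi=\psi'+\nu$ for some non-decreasing $\nu\in\mathcal{D}[0,\infty)$ with $\nu(0)=0$, then for each $t\ge0$: (1) $\big[-[c_0-c_0']^+-\nu(t)\big]\vee\big[-(r(t)-\ell(t))\big]\le\phi'(t)-\phi(t)\le[c_0'-c_0]^+\wedge[r(t)-\ell(t)]$; (2) $\eta(t)-[c_0'-c_0]^+\le\eta'(t)\le\eta(t)+\nu(t)+[c_0-c_0']^+$.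
   Context: $\mathcal{D}[0,\infty)$ denotes the càdlàg functions $[0,\infty)\to(-\infty,\infty)$; $a\wedge b=\min\{a,b\}$, $a\vee b=\max\{a,b\}$, $a^+=a\vee0$. ESP: $(\phi,\eta)\in\mathcal{D}[0,\infty)^2$ solves the ESP on $[\ell(\cdot),r(\cdot)]$ for $\psi$ if (1) $\phi(t)=\psi(t)+\eta(t)\in[\ell(t),r(t)]$ for all $t\ge0$; (2) for all $0\le s\le t$: $\eta(t)-\eta(s)\ge0$ if $\phi(u)<r(u)$ for all $u\in(s,t]$, and $\eta(t)-\eta(s)\le0$ if $\phi(u)>\ell(u)$ for all $u\in(s,t]$; (3) for all $t\ge0$: $\eta(t)-\eta(t-)\ge0$ if $\phi(t)<r(t)$, and $\eta(t)-\eta(t-)\le0$ if $\phi(t)>\ell(t)$, where $\eta(0-)=0$. *)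

From Stdlib Require Import Reals Lra.
Open Scope R_scope.

Definition right_cont (f : R -> R) (t : R) : Prop :=
  forall eps, 0 < eps -> exists delta, 0 < delta /\
    forall s, t <= s < t + delta -> Rabs (f s - f t) < eps.

Definition left_lim (f : R -> R) (t L : R) : Prop :=
  forall eps, 0 < eps -> exists delta, 0 < delta /\
    forall s, 0 <= s -> t - delta < s < t -> Rabs (f s - L) < eps.

(* Càdlàg functions on [0,oo): values on (-oo,0) are irrelevant. *)
Definition cadlag (f : R -> R) : Prop :=
  (forall t, 0 <= t -> right_cont f t) /\
  (forall t, 0 < t -> exists L, left_lim f t L).

(* f(t-) = L, with the convention f(0-) = 0. *)
Definition left_val (f : R -> R) (t L : R) : Prop :=
  (t = 0 /\ L = 0) \/ (0 < t /\ left_lim f t L).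

Definition pos_part (a : R) : R := Rmax a 0.

Definition ESP (l r psi phi eta : R -> R) : Prop :=
  cadlag phi /\ cadlag eta /\
  (forall t, 0 <= t -> phi t = psi t + eta t /\ l t <= phi t <= r t) /\
  (forall s t, 0 <= s <= t ->
     ((forall u, s < u <= t -> phi u < r u) -> eta t - eta s >= 0) /\
     ((forall u, s < u <= t -> phi u > l u) -> eta t - eta s <= 0)) /\
  (forall t L, 0 <= t -> left_val eta t L ->
     (phi t < r t -> eta t - L >= 0) /\
     (phi t > l t -> eta t - L <= 0)).

(* Compare the two solutions through X = (eta_A - eta_B) - nu + const.  While
   phi_A > phi_B, the regulator eta_A cannot push upwards (phi_A > l) and eta_B
   cannot push downwards (phi_B < r), so X cannot increase during such an
   excursion, nor jump up at its start.  A supremum argument then shows that X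
   never exceeds the positive part of the constant; the two orderings of the solutions
   give the two sides of (1), and (2) is (1) rewritten with phi = c + psi + eta. *)

From Stdlib Require Import Reals Lra Classical.
Open Scope R_scope.

Lemma is_lub_approx (E : R -> Prop) (s eps : R) :
  is_lub E s -> 0 < eps -> exists u, E u /\ s - eps < u.
Proof.
intros [_ Hlub] Heps.
apply NNPP; intro Hno.
assert (Hub : is_upper_bound E (s - eps)).
{ intros u Eu; apply Rnot_lt_le; intro Hu; apply Hno; now exists u. }
specialize (Hlub _ Hub); lra.
Qed.

Lemma le_of_excursions_nonincreasing (X : R -> R) (c : R) :
  X 0 <= c ->
  (forall s t, 0 <= s <= t -> (forall u, s < u <= t -> c < X u) -> X t <= X s) ->
  (forall t, 0 < t -> c < X t -> forall eps, 0 < eps -> exists delta, 0 < delta /\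
     forall u, 0 <= u -> t - delta < u < t -> X t <= X u + eps) ->
  forall t, 0 <= t -> X t <= c.
Proof.
intros HX0 Hexc Hjump t Ht.
apply Rnot_lt_le; intro Ht_above.
set (E := fun u => 0 <= u <= t /\ X u <= c).
assert (E0 : E 0) by (split; [lra | exact HX0]).
assert (Hbound : bound E) by (exists t; intros u [[_ Hu] _]; exact Hu).
destruct (completeness E Hbound (ex_intro _ 0 E0)) as [s Hs].
assert (Hs_t : s <= t) by (apply Hs; intros u [[_ Hu] _]; exact Hu).
assert (Hs_0 : 0 <= s) by (apply Hs; exact E0).
assert (Hafter : forall u, s < u <= t -> c < X u).
{ intros u Hu; apply Rnot_le_lt; intro Xu.
  assert (Hus : u <= s) by (apply Hs; split; [lra | exact Xu]); lra. }
destruct (Rle_or_lt (X s) c) as [Xs | Xs].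
- specialize (Hexc s t (conj Hs_0 Hs_t) Hafter); lra.
- assert (Hs_pos : 0 < s) by (destruct (Req_dec s 0) as [->|]; lra).
  destruct (Hjump s Hs_pos Xs ((X s - c) / 2) ltac:(lra)) as [delta [Hdelta Hnear]].
  destruct (is_lub_approx E s delta Hs Hdelta) as [u [Eu Hu]].
  assert (Hus : u <= s) by (apply Hs; exact Eu).
  destruct Eu as [[Hu0 _] Xu].
  assert (Hus' : u < s) by (destruct (Req_dec u s) as [->|]; lra).
  specialize (Hnear u Hu0 (conj Hu Hus')); lra.
Qed.

Section ESP_comparison.

Variables l r psiA phiA etaA psiB phiB etaB : R -> R.
Hypothesis HA : ESP l r psiA phiA etaA.
Hypothesis HB : ESP l r psiB phiB etaB.

Let D u := etaA u - etaB u.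

Lemma ESP_gap_excursion s t : 0 <= s <= t ->
  (forall u, s < u <= t -> phiB u < phiA u) -> D t <= D s.
Proof.
destruct HA as [_ [_ [HrA [HiA _]]]]; destruct HB as [_ [_ [HrB [HiB _]]]].
intros Hst Hgap; unfold D.
assert (HdA : etaA t - etaA s <= 0).
{ apply (HiA s t Hst); intros u Hu.
  specialize (Hgap u Hu); destruct (HrB u ltac:(lra)); lra. }
assert (HdB : etaB t - etaB s >= 0).
{ apply (HiB s t Hst); intros u Hu.
  specialize (Hgap u Hu); destruct (HrA u ltac:(lra)); lra. }
lra.
Qed.

Lemma ESP_gap_at0 : phiB 0 < phiA 0 -> D 0 <= 0.
Proof.
destruct HA as [_ [_ [HrA [_ HjA]]]]; destruct HB as [_ [_ [HrB [_ HjB]]]].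
intro Hgap; unfold D.
assert (Hval : forall f, left_val f 0 0) by (intro; left; split; reflexivity).
destruct (HrA 0 (Rle_refl 0)) as [_ RA]; destruct (HrB 0 (Rle_refl 0)) as [_ RB].
assert (HdA := proj2 (HjA 0 0 (Rle_refl 0) (Hval _)) ltac:(lra)).
assert (HdB := proj1 (HjB 0 0 (Rle_refl 0) (Hval _)) ltac:(lra)).
lra.
Qed.

Lemma ESP_gap_left_jump t : 0 < t -> phiB t < phiA t ->
  forall eps, 0 < eps -> exists delta, 0 < delta /\
    forall u, 0 <= u -> t - delta < u < t -> D t <= D u + eps.
Proof.
destruct HA as [_ [[_ HlA] [HrA [_ HjA]]]]; destruct HB as [_ [[_ HlB] [HrB [_ HjB]]]].
intros Ht Hgap eps Heps; unfold D.
destruct (HlA t Ht) as [LA HLA]; destruct (HlB t Ht) as [LB HLB].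
destruct (HrA t ltac:(lra)) as [_ RA]; destruct (HrB t ltac:(lra)) as [_ RB].
assert (HdA := proj2 (HjA t LA ltac:(lra) (or_intror (conj Ht HLA))) ltac:(lra)).
assert (HdB := proj1 (HjB t LB ltac:(lra) (or_intror (conj Ht HLB))) ltac:(lra)).
destruct (HLA (eps / 2) ltac:(lra)) as [dA [HdA_pos HnearA]].
destruct (HLB (eps / 2) ltac:(lra)) as [dB [HdB_pos HnearB]].
exists (Rmin dA dB); split; [now apply Rmin_pos |].
intros u Hu0 Hu.
assert (HmA := Rmin_l dA dB); assert (HmB := Rmin_r dA dB).
assert (HuA := Rabs_def2 _ _ (HnearA u Hu0 ltac:(lra))).
assert (HuB := Rabs_def2 _ _ (HnearB u Hu0 ltac:(lra))).
lra.
Qed.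

Lemma ESP_gap_le_pos_part (k : R) (g : R -> R) :
  (forall s t, 0 <= s <= t -> g s <= g t) -> g 0 = 0 ->
  (forall u, 0 <= u -> 0 < k + D u - g u -> phiB u < phiA u) ->
  forall t, 0 <= t -> k + D t - g t <= pos_part k.
Proof.
intros Hg Hg0 Hgap.
assert (Hk : k <= pos_part k /\ 0 <= pos_part k)
  by (unfold pos_part, Rmax; destruct Rle_dec; lra).
apply (le_of_excursions_nonincreasing (fun u => k + D u - g u)).
- destruct (Rle_or_lt (k + D 0 - g 0) 0) as [| Hpos]; [lra |].
  assert (H0 := ESP_gap_at0 (Hgap 0 (Rle_refl 0) Hpos)); lra.
- intros s t Hst Habove.
  assert (HD := ESP_gap_excursion s t Hst
                  (fun u Hu => Hgap u ltac:(lra) ltac:(specialize (Habove u Hu); lra))).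
  assert (Hgst := Hg s t Hst); lra.
- intros t Ht Habove eps Heps.
  destruct (ESP_gap_left_jump t Ht (Hgap t ltac:(lra) ltac:(lra)) eps Heps)
    as [delta [Hdelta Hnear]].
  exists delta; split; [exact Hdelta |].
  intros u Hu0 Hu; specialize (Hnear u Hu0 Hu).
  assert (Hgu := Hg u t ltac:(lra)); lra.
Qed.

End ESP_comparison.

Theorem proposition3p4
  (l r : R -> R) (c0 c0' : R) (psi psi' phi eta phi' eta' nu : R -> R) :
  cadlag l -> cadlag r -> (forall t, 0 <= t -> l t <= r t) ->
  cadlag psi -> cadlag psi' ->
  ESP l r (fun t => c0 + psi t) phi eta ->
  ESP l r (fun t => c0' + psi' t) phi' eta' ->
  cadlag nu -> (forall s t, 0 <= s <= t -> nu s <= nu t) -> nu 0 = 0 ->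
  (forall t, 0 <= t -> psi t = psi' t + nu t) ->
  forall t, 0 <= t ->
    Rmax (- pos_part (c0 - c0') - nu t) (- (r t - l t)) <= phi' t - phi t
    /\ phi' t - phi t <= Rmin (pos_part (c0' - c0)) (r t - l t)
    /\ eta t - pos_part (c0' - c0) <= eta' t
    /\ eta' t <= eta t + nu t + pos_part (c0 - c0').
Proof.
intros _ _ _ _ _ Hesp Hesp' _ Hnu Hnu0 Hpsi.
assert (Hphi : forall u, 0 <= u -> phi u = c0 + (psi' u + nu u) + eta u
                                   /\ phi' u = c0' + psi' u + eta' u).
{ intros u Hu; destruct Hesp as [_ [_ [Hr _]]]; destruct Hesp' as [_ [_ [Hr' _]]].
  rewrite <- Hpsi by exact Hu; split; [apply Hr | apply Hr']; exact Hu. }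
intros t Ht.
assert (Hupper := ESP_gap_le_pos_part l r _ _ _ _ _ _ Hesp' Hesp (c0' - c0) nu
  Hnu Hnu0 ltac:(intros u Hu; specialize (Hphi u Hu); lra) t Ht).
assert (Hlower := ESP_gap_le_pos_part l r _ _ _ _ _ _ Hesp Hesp' (c0 - c0') (fun _ => 0)
  ltac:(intros; lra) eq_refl
  ltac:(intros u Hu; specialize (Hphi u Hu); specialize (Hnu 0 u ltac:(lra)); lra) t Ht).
destruct Hesp as [_ [_ [Hr _]]]; destruct Hesp' as [_ [_ [Hr' _]]].
destruct (Hr t Ht) as [_ ?]; destruct (Hr' t Ht) as [_ ?]; specialize (Hphi t Ht).
unfold pos_part in *.
split; [apply Rmax_lub | split; [apply Rmin_glb |]]; unfold Rmax in *;
  repeat destruct Rle_dec; lra.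
Qed.
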